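(* Define the relation $\succeq^4$ on $\mathcal{A}$ by $\mathbf{A}\succeq^4\mathbf{B}\iff\lambda(\mathbf{A})\le\lambda(\mathbf{B})$, where for $\mathbf{A}=[a_{ij}]$ of size $n$, $\lambda(\mathbf{A})=\max_{1\le i<j<k\le n}\max\{a_{jk}/a_{ik},\ a_{ik}/a_{jk}\}$. Then $\succeq^4$ is an inconsistency ranking that satisfies PR, IIP, HTE, MON and RED, but does not satisfy SI.
   Context: A pairwise comparison matrix of size $n$ is a matrix $\mathbf{A}=[a_{ij}]\in\mathbb{R}^{n\times n}$ with all entries positive and $a_{ji}=1/a_{ij}$ for all $i,j$. Let $\mathcal{A}$ denote the set of all pairwise comparison matrices of all sizes $n\ge 3$. For $\mathbf{A}\in\mathcal{A}$ of size $n$ and $3\le m\le n$, a submatrix of $\mathbf{A}$ is a matrix $\mathbf{B}=[b_{ij}]$ of size $m$ with $b_{ij}=a_{\sigma(i)\sigma(j)}$ for some strictly increasing map $\sigma:\{1,\dots,m\}\to\{1,\dots,n\}$. A triad is a pairwise comparison matrix of size $3$; a triad of $\mathbf{A}$ is a submatrix of $\mathbf{A}$ of size $3$ (when $n=3$, $\mathbf{A}$ is its own unique triad). A triad $\mathbf{T}$ is written $\mathbf{T}=(t_1;t_2;t_3)$, meaning $t_{12}=t_1$, $t_{13}=t_2$, $t_{23}=t_3$ (the remaining entries are determined by reciprocity); $\mathbf{T}^\top$ denotes its transpose, i.e. the triad $(1/t_1;1/t_2;1/t_3)$. An inconsistency ranking is a complete and transitive binary relation $\succeq$ on $\mathcal{A}$;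 $\mathbf{A}\sim\mathbf{B}$ means $\mathbf{A}\succeq\mathbf{B}$ and $\mathbf{B}\succeq\mathbf{A}$; $\mathbf{A}\preceq\mathbf{B}$ means $\mathbf{B}\succeq\mathbf{A}$. Properties of an inconsistency ranking $\succeq$: (PR) for all $s_2,t_2\ge 1$: $(1;s_2;1)\succeq(1;t_2;1)\iff s_2\le t_2$. (IIP) $\mathbf{T}\sim\mathbf{T}^\top$ for every triad $\mathbf{T}$. (HTE) $(1;t_2;t_3)\sim(1;t_2/t_3;1)$ for all $t_2,t_3>0$. (SI) $(t_1;t_2;t_3)\sim(kt_1;k^2t_2;kt_3)$ for all $t_1,t_2,t_3>0$ and all $k>0$. (MON) $\mathbf{A}\preceq\mathbf{T}$ for every $\mathbf{A}\in\mathcal{A}$ and every triad $\mathbf{T}$ of $\mathbf{A}$. (RED) every $\mathbf{A}\in\mathcal{A}$ has a triad $\mathbf{T}$ with $\mathbf{A}\sim\mathbf{T}$. *)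

From Stdlib Require Import Reals Lra Lia List.
Import ListNotations.
Open Scope R_scope.

(* A pairwise comparison matrix of size n >= 3; indices are 0-based
   (i, j < n).  Entries outside the range are irrelevant. *)
Record PCM := {
  pc_n : nat;
  pc_a : nat -> nat -> R;
  pc_size : (3 <= pc_n)%nat;
  pc_pos : forall i j, (i < pc_n)%nat -> (j < pc_n)%nat -> 0 < pc_a i j;
  pc_rec : forall i j, (i < pc_n)%nat -> (j < pc_n)%nat -> pc_a j i = / pc_a i j
}.

Definition is_submatrix (B A : PCM) : Prop :=
  exists sigma : nat -> nat,
    (forall i j, (i < j)%nat -> (j < pc_n B)%nat -> (sigma i < sigma j)%nat) /\
    (forall i, (i < pc_n B)%nat -> (sigma i < pc_n A)%nat) /\
    (forall i j, (i < pc_n B)%nat -> (j < pc_n B)%nat ->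
       pc_a B i j = pc_a A (sigma i) (sigma j)).

Definition is_triad (T : PCM) : Prop := pc_n T = 3%nat.

Definition triad_of (T A : PCM) : Prop := is_triad T /\ is_submatrix T A.

(* T is the triad (t1; t2; t3): t_12 = t1, t_13 = t2, t_23 = t3 (1-based). *)
Definition triad_eq (T : PCM) (t1 t2 t3 : R) : Prop :=
  pc_n T = 3%nat /\ pc_a T 0 1 = t1 /\ pc_a T 0 2 = t2 /\ pc_a T 1 2 = t3.

Definition relation := PCM -> PCM -> Prop.

Definition sim (r : relation) (A B : PCM) : Prop := r A B /\ r B A.

Definition inconsistency_ranking (r : relation) : Prop :=
  (forall A B, r A B \/ r B A) /\
  (forall A B C, r A B -> r B C -> r A C).

Definition PR (r : relation) : Prop :=
  forall s2 t2 S T, 1 <= s2 -> 1 <= t2 ->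
    triad_eq S 1 s2 1 -> triad_eq T 1 t2 1 -> (r S T <-> s2 <= t2).

Definition IIP (r : relation) : Prop :=
  forall t1 t2 t3 T T', triad_eq T t1 t2 t3 -> triad_eq T' (/ t1) (/ t2) (/ t3) ->
    sim r T T'.

Definition HTE (r : relation) : Prop :=
  forall t2 t3 T T', 0 < t2 -> 0 < t3 ->
    triad_eq T 1 t2 t3 -> triad_eq T' 1 (t2 / t3) 1 -> sim r T T'.

Definition SI (r : relation) : Prop :=
  forall t1 t2 t3 k T T', 0 < t1 -> 0 < t2 -> 0 < t3 -> 0 < k ->
    triad_eq T t1 t2 t3 -> triad_eq T' (k * t1) (k ^ 2 * t2) (k * t3) -> sim r T T'.

(* A ⪯ T, i.e. T ⪰ A, for every triad T of A *)
Definition MON (r : relation) : Prop :=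
  forall A T, triad_of T A -> r T A.

Definition RED (r : relation) : Prop :=
  forall A, exists T, triad_of T A /\ sim r A T.

(* maximum of a list of reals (default 0 for the empty list) *)
Fixpoint Rmax_list (l : list R) : R :=
  match l with
  | [] => 0
  | x :: l' => Rmax x (Rmax_list l')
  end.

Definition triples (n : nat) : list (nat * nat * nat) :=
  flat_map (fun i =>
    flat_map (fun j =>
      map (fun k => (i, j, k)) (seq (S j) (n - S j)))
    (seq (S i) (n - S i)))
  (seq 0 n).

Definition lam (A : PCM) : R :=
  Rmax_list (map (fun '(i, j, k) =>
     Rmax (pc_a A j k / pc_a A i k) (pc_a A i k / pc_a A j k))
   (triples (pc_n A))).

Definition succ4 : relation := fun A B => lam A <= lam B.

(* λ(A) only looks at the entries a_ik, a_jk of each triple i < j < k, so the λ of a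
   triad (t1; t2; t3) is max(t2/t3, t3/t2).  Hence on triads λ is invariant under
   transposition and under (1; t2; t3) ↦ (1; t2/t3; 1), and it is increasing in t2 on
   (1; t2; 1).  Every triad of A contributes one of the terms whose maximum is λ(A),
   which gives MON, and the triad realizing the maximum gives RED.  SI fails because
   (1; 1; 1) has λ = 1 whereas (2; 4; 2) has λ = 2. *)
From Stdlib Require Import Reals Lra Lia List.
Open Scope R_scope.

Definition spread (x y : R) : R := Rmax (x / y) (y / x).

Lemma spread_comm (x y : R) : spread x y = spread y x.
Proof. unfold spread; apply Rmax_comm. Qed.

Lemma spread_pos (x y : R) : 0 < x -> 0 < y -> 0 < spread x y.
Proof.
  intros Hx Hy; unfold spread.
  apply Rlt_le_trans with (x / y); [apply Rdiv_lt_0_compat; lra | apply Rmax_l].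
Qed.

Lemma spread_inv (x y : R) : 0 < x -> 0 < y -> spread (/ x) (/ y) = spread x y.
Proof.
  intros Hx Hy; rewrite spread_comm; unfold spread.
  replace (/ y / / x) with (x / y) by (field; lra).
  replace (/ x / / y) with (y / x) by (field; lra).
  reflexivity.
Qed.

Lemma spread_normalize (x y : R) : 0 < x -> 0 < y -> spread x y = spread 1 (y / x).
Proof.
  intros Hx Hy; unfold spread.
  replace (1 / (y / x)) with (x / y) by (field; lra).
  replace (y / x / 1) with (y / x) by (field; lra).
  reflexivity.
Qed.

Lemma spread_1_ge1 (x : R) : 1 <= x -> spread 1 x = x.
Proof.
  intros Hx; unfold spread.
  assert (Hinv : 1 / x <= 1) by (apply Rmult_le_reg_r with x; [lra|]; field_simplify; lra).
  rewrite Rmax_right; [field|]; lra.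
Qed.

Lemma Rmax_list_ge (l : list R) (x : R) : In x l -> x <= Rmax_list l.
Proof.
  induction l as [|a l IH]; simpl; [tauto|].
  intros [<- | Hx]; [apply Rmax_l |].
  eapply Rle_trans; [apply IH, Hx | apply Rmax_r].
Qed.

Lemma Rmax_list_pos_in (l : list R) : 0 < Rmax_list l -> In (Rmax_list l) l.
Proof.
  induction l as [|a l IH]; simpl; [lra|].
  unfold Rmax; destruct (Rle_dec a (Rmax_list l)); [right; auto | left; auto].
Qed.

Lemma In_triples (n i j k : nat) :
  In (i, j, k) (triples n) <-> (i < j /\ j < k /\ k < n)%nat.
Proof.
  unfold triples; rewrite in_flat_map; split.
  - intros (i' & Hi' & H); apply in_flat_map in H as (j' & Hj' & H).
    apply in_map_iff in H as (k' & Heq & Hk').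
    apply in_seq in Hi', Hj', Hk'; injection Heq; lia.
  - intros Hijk; exists i; split; [apply in_seq; lia|].
    apply in_flat_map; exists j; split; [apply in_seq; lia|].
    apply in_map, in_seq; lia.
Qed.

Definition triple_spread (A : PCM) (t : nat * nat * nat) : R :=
  let '(i, j, k) := t in spread (pc_a A j k) (pc_a A i k).

Lemma lam_triple_spread (A : PCM) :
  lam A = Rmax_list (map (triple_spread A) (triples (pc_n A))).
Proof. reflexivity. Qed.

Lemma triple_spread_pos (A : PCM) (i j k : nat) :
  (i < j < k)%nat -> (k < pc_n A)%nat -> 0 < triple_spread A (i, j, k).
Proof. intros Hijk Hk; apply spread_pos; apply pc_pos; lia. Qed.

Lemma triple_spread_le_lam (A : PCM) (i j k : nat) :
  (i < j < k)%nat -> (k < pc_n A)%nat -> triple_spread A (i, j, k) <= lam A.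
Proof.
  intros Hijk Hk; rewrite lam_triple_spread.
  apply Rmax_list_ge, in_map, In_triples; lia.
Qed.

Lemma lam_pos (A : PCM) : 0 < lam A.
Proof.
  pose proof (pc_size A).
  apply Rlt_le_trans with (triple_spread A (0, 1, 2)%nat);
    [apply triple_spread_pos | apply triple_spread_le_lam]; lia.
Qed.

Lemma lam_attained (A : PCM) :
  exists i j k, (i < j < k)%nat /\ (k < pc_n A)%nat /\ lam A = triple_spread A (i, j, k).
Proof.
  pose proof (Rmax_list_pos_in (map (triple_spread A) (triples (pc_n A)))) as Hin.
  rewrite <- lam_triple_spread in Hin; specialize (Hin (lam_pos A)).
  apply in_map_iff in Hin as ([[i j] k] & Heq & Hijk).
  apply In_triples in Hijk.
  exists i, j, k; split; [lia | split; [lia | auto]].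
Qed.

Lemma lam_triad (T : PCM) (t1 t2 t3 : R) : triad_eq T t1 t2 t3 -> lam T = spread t3 t2.
Proof.
  intros (Hn & _ & H02 & H12).
  rewrite lam_triple_spread, Hn; simpl.
  rewrite Rmax_left, H02, H12; [reflexivity|].
  apply Rlt_le, (triple_spread_pos T 0 1 2); lia.
Qed.

Lemma triad_eq_pos (T : PCM) (t1 t2 t3 : R) :
  triad_eq T t1 t2 t3 -> 0 < t1 /\ 0 < t2 /\ 0 < t3.
Proof. intros (Hn & <- & <- & <-); repeat split; apply pc_pos; lia. Qed.

Lemma triad_of_lam_le (T A : PCM) : triad_of T A -> lam T <= lam A.
Proof.
  intros [Hn (sigma & Hmono & Hrange & Hentries)]; unfold is_triad in Hn.
  rewrite (lam_triad T _ _ _ (conj Hn (conj eq_refl (conj eq_refl eq_refl)))).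
  rewrite !Hentries by lia.
  apply (triple_spread_le_lam A (sigma 0%nat) (sigma 1%nat) (sigma 2%nat));
    [split; apply Hmono | apply Hrange]; lia.
Qed.

Definition triad_at (A : PCM) (i j k : nat) (Hi : (i < pc_n A)%nat)
  (Hj : (j < pc_n A)%nat) (Hk : (k < pc_n A)%nat) : PCM.
Proof.
  set (sigma := fun x : nat => match x with 0%nat => i | 1%nat => j | _ => k end).
  assert (Hsigma : forall x, (sigma x < pc_n A)%nat) by (intros [|[|x]]; assumption).
  refine {| pc_n := 3; pc_a := fun x y => pc_a A (sigma x) (sigma y) |}.
  - lia.
  - intros x y _ _; apply pc_pos; apply Hsigma.
  - intros x y _ _; apply pc_rec; apply Hsigma.
Defined.

Lemma triad_at_triad_of (A : PCM) (i j k : nat) Hi Hj Hk :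
  (i < j < k)%nat -> triad_of (triad_at A i j k Hi Hj Hk) A.
Proof.
  intros Hijk; split; [reflexivity|].
  exists (fun x : nat => match x with 0%nat => i | 1%nat => j | _ => k end).
  split; [|split]; cbn.
  - intros [|[|x]] [|[|y]]; lia.
  - intros [|[|x]]; auto.
  - reflexivity.
Qed.

Lemma lam_triad_at (A : PCM) (i j k : nat) Hi Hj Hk :
  lam (triad_at A i j k Hi Hj Hk) = triple_spread A (i, j, k).
Proof. apply (lam_triad _ (pc_a A i j) (pc_a A i k) (pc_a A j k)); repeat split. Qed.

Definition triad_entry (t1 t2 t3 : R) (x y : nat) : R :=
  match x, y with
  | O, S O => t1 | S O, O => / t1 | O, S (S O) => t2 | S (S O), O => / t2
  | S O, S (S O) => t3 | S (S O), S O => / t3 | _, _ => 1 end.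

Definition mk_triad (t1 t2 t3 : R) (H1 : 0 < t1) (H2 : 0 < t2) (H3 : 0 < t3) : PCM.
Proof.
  refine {| pc_n := 3; pc_a := triad_entry t1 t2 t3 |}.
  - lia.
  - intros [|[|[|x]]] [|[|[|y]]] Hx Hy; try lia; cbn;
      try apply Rinv_0_lt_compat; lra.
  - intros [|[|[|x]]] [|[|[|y]]] Hx Hy; try lia; cbn;
      rewrite ?Rinv_inv, ?Rinv_1; reflexivity.
Defined.

Lemma mk_triad_eq (t1 t2 t3 : R) H1 H2 H3 : triad_eq (mk_triad t1 t2 t3 H1 H2 H3) t1 t2 t3.
Proof. repeat split. Qed.

Lemma succ4_ranking : inconsistency_ranking succ4.
Proof.
  unfold succ4; split.
  - intros A B; destruct (Rle_lt_dec (lam A) (lam B)); [left | right]; lra.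
  - intros A B C; apply Rle_trans.
Qed.

Lemma succ4_PR : PR succ4.
Proof.
  intros s2 t2 S T Hs Ht HS HT; unfold succ4.
  rewrite (lam_triad S _ _ _ HS), (lam_triad T _ _ _ HT), !spread_1_ge1 by assumption.
  tauto.
Qed.

Lemma succ4_IIP : IIP succ4.
Proof.
  intros t1 t2 t3 T T' HT HT'; unfold sim, succ4.
  destruct (triad_eq_pos T _ _ _ HT) as (_ & H2 & H3).
  rewrite (lam_triad T _ _ _ HT), (lam_triad T' _ _ _ HT'), spread_inv by assumption.
  lra.
Qed.

Lemma succ4_HTE : HTE succ4.
Proof.
  intros t2 t3 T T' H2 H3 HT HT'; unfold sim, succ4.
  rewrite (lam_triad T _ _ _ HT), (lam_triad T' _ _ _ HT'),
    (spread_normalize t3 t2) by assumption.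
  lra.
Qed.

Lemma succ4_MON : MON succ4.
Proof. intros A T HT; apply triad_of_lam_le, HT. Qed.

Lemma succ4_RED : RED succ4.
Proof.
  intros A.
  destruct (lam_attained A) as (i & j & k & Hijk & Hk & Hlam).
  assert (Hi : (i < pc_n A)%nat) by lia.
  assert (Hj : (j < pc_n A)%nat) by lia.
  exists (triad_at A i j k Hi Hj Hk); split; [apply triad_at_triad_of, Hijk|].
  unfold sim, succ4; rewrite lam_triad_at; lra.
Qed.

Lemma succ4_not_SI : ~ SI succ4.
Proof.
  intros HSI.
  assert (H1 : 0 < 1) by lra.
  assert (H2 : 0 < 2 * 1) by lra.
  assert (H4 : 0 < 2 ^ 2 * 1) by lra.
  destruct (HSI 1 1 1 2 _ _ H1 H1 H1 ltac:(lra)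
              (mk_triad_eq 1 1 1 H1 H1 H1) (mk_triad_eq _ _ _ H2 H4 H2)) as [_ Hle].
  unfold succ4 in Hle.
  rewrite !lam_triad with (1 := mk_triad_eq _ _ _ _ _ _) in Hle.
  rewrite spread_normalize, spread_1_ge1 in Hle by lra.
  replace (2 ^ 2 * 1 / (2 * 1)) with 2 in Hle by field.
  rewrite spread_1_ge1 in Hle; lra.
Qed.

Theorem mainTheorem5 :
  inconsistency_ranking succ4 /\ PR succ4 /\ IIP succ4 /\ HTE succ4 /\
  MON succ4 /\ RED succ4 /\ ~ SI succ4.
Proof.
  exact (conj succ4_ranking (conj succ4_PR (conj succ4_IIP (conj succ4_HTE
          (conj succ4_MON (conj succ4_RED succ4_not_SI)))))).
Qed.
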